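(* In the linear model setting described in the context, for any $\tau\in[0,1]$, $$\mathcal U(\hat f_\tau)=\tau\sum_{s=1}^Kw_s\Big(\hat b_s-\sum_{s'=1}^Kw_{s'}\hat b_{s'}\Big)^2\quad\text{almost surely.}$$
   Context: Model: $Y=\langle\boldsymbol X,\boldsymbol\beta^*\rangle+b^*_S+\xi$, $\boldsymbol X\sim\mathcal N(\boldsymbol0,\boldsymbol\Sigma)$ with $\boldsymbol\Sigma\succ0$, independent of $S\in[K]$, $\xi\sim\mathcal N(0,\sigma^2)$ independent. Observations: for each $s$, $\boldsymbol Y_s=\mathbf X_s\boldsymbol\beta^*+b^*_s\boldsymbol1_{n_s}+\boldsymbol\xi_s$ ($\mathbf X_s\in\mathbb R^{n_s\times p}$ with i.i.d. $\mathcal N(\boldsymbol0,\boldsymbol\Sigma)$ rows, $\boldsymbol\xi_s$ with i.i.d. $\mathcal N(0,\sigma^2)$ entries, all independent); $n=\sum_sn_s$, $w_s=n_s/n$. $(\hat{\boldsymbol\beta},\hat{\boldsymbol b})\in\arg\min_{(\boldsymbol\beta,\boldsymbol b)}\sum_sw_s\frac1{n_s}\|\boldsymbol Y_s-\mathbf X_s\boldsymbol\beta-b_s\boldsymbol1_{n_s}\|_2^2$ and $\hat f_\tau(\boldsymbol x,s)=\langle\boldsymbol x,\hat{\boldsymbol\beta}\rangle+\sqrt\tau\hat b_s+(1-\sqrt\tau)\sum_{s'}w_{s'}\hat b_{s'}$. Unfairness (with the sample fixed): $\mathcal U(f)=\min_{\nu\in\mathcal P_2(\mathbb R)}\sum_sw_s\mathsf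 W_2^2(\mathrm{Law}(f(\boldsymbol X,s)),\nu)$, $\boldsymbol X\sim\mathcal N(\boldsymbol0,\boldsymbol\Sigma)$, $\mathsf W_2$ the Wasserstein-2 distance. *)

From HB Require Import structures.
From mathcomp Require Import all_boot all_order all_algebra.
From mathcomp Require Import all_classical all_reals all_analysis.

Set Implicit Arguments.
Unset Strict Implicit.
Unset Printing Implicit Defensive.

Import Order.TTheory GRing.Theory Num.Theory.
Import numFieldNormedType.Exports.
Local Open Scope classical_set_scope.
Local Open Scope ring_scope.

Section Defs.
Variable R : realType.

Definition inner (p : nat) (x y : 'rV[R]_p) : R := \sum_(i < p) x 0 i * y 0 i.

Definition quadf (p : nat) (Sigma : 'M[R]_p) (v : 'rV[R]_p) : R :=
  (v *m Sigma *m v^T) 0 0.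

Definition posdef (p : nat) (Sigma : 'M[R]_p) : Prop :=
  Sigma^T = Sigma /\ forall v : 'rV[R]_p, v != 0 -> 0 < quadf Sigma v.

(* X ~ N(0, Sigma) (Cramer-Wold definition: every linear functional <X, v>
   is measurable and, for v <> 0, has law N(0, v Sigma v^T)). *)
Definition is_gaussian_vector d (Omega : measurableType d)
    (P : probability Omega R) (p : nat) (Sigma : 'M[R]_p)
    (X : Omega -> 'rV[R]_p) : Prop :=
  forall v : 'rV[R]_p,
    measurable_fun setT (fun w => inner (X w) v) /\
    (v != 0 -> pushforward P (fun w => inner (X w) v) =
               normal_prob 0 (Num.sqrt (quadf Sigma v))).

Definition law d (Omega : measurableType d) (P : probability Omega R)
    (F : Omega -> R) : set R -> \bar R := pushforward P F.

Definition coupling (mu nu : set R -> \bar R) (pi : probability (R * R)%type R)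
  : Prop :=
  forall A : set R, measurable A ->
    pi (fst @^-1` A) = mu A /\ pi (snd @^-1` A) = nu A.

Definition W2sq (mu nu : set R -> \bar R) : \bar R :=
  ereal_inf [set c | exists2 pi : probability (R * R)%type R,
      coupling mu nu pi &
      c = (\int[pi]_z (((z.1 - z.2) ^+ 2)%:E))%E].

Definition P2 : set (probability R R) :=
  [set nu : probability R R | (\int[nu]_x ((x ^+ 2)%:E) < +oo)%E].

Definition unf_obj (K : nat) (w : 'I_K -> R) (mu : 'I_K -> set R -> \bar R)
    (nu : probability R R) : \bar R :=
  (\sum_(s < K) (w s)%:E * W2sq (mu s) nu)%E.

(* U(f) = min_{nu in P_2} sum_s w_s W2^2(Law(f(X,s)), nu), given the laws
   mu s = Law(f(X,s)); defined as the infimum (attainment is stated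
   separately in the theorem). *)
Definition unfairness (K : nat) (w : 'I_K -> R) (mu : 'I_K -> set R -> \bar R)
  : \bar R :=
  ereal_inf [set c | exists2 nu, P2 nu & c = unf_obj w mu nu].

Definition weights (K : nat) (n : 'I_K -> nat) (s : 'I_K) : R :=
  (n s)%:R / (\sum_(t < K) n t)%:R.

Definition emp_risk (K p : nat) (n : 'I_K -> nat)
    (Xs : forall s : 'I_K, 'M[R]_(n s, p)) (Ys : forall s : 'I_K, 'cV[R]_(n s))
    (beta : 'rV[R]_p) (b : 'I_K -> R) : R :=
  \sum_(s < K) weights n s / (n s)%:R *
    \sum_(i < n s) (Ys s i 0 - inner (row i (Xs s)) beta - b s) ^+ 2.

Definition is_erm (K p : nat) (n : 'I_K -> nat)
    (Xs : forall s : 'I_K, 'M[R]_(n s, p)) (Ys : forall s : 'I_K, 'cV[R]_(n s))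
    (beta : 'rV[R]_p) (b : 'I_K -> R) : Prop :=
  forall (beta' : 'rV[R]_p) (b' : 'I_K -> R),
    emp_risk Xs Ys beta b <= emp_risk Xs Ys beta' b'.

Definition wmean (K : nat) (w : 'I_K -> R) (b : 'I_K -> R) : R :=
  \sum_(s < K) w s * b s.

Definition fhat (K p : nat) (w : 'I_K -> R) (beta : 'rV[R]_p) (b : 'I_K -> R)
    (tau : R) (x : 'rV[R]_p) (s : 'I_K) : R :=
  inner x beta + Num.sqrt tau * b s + (1 - Num.sqrt tau) * wmean w b.

End Defs.

From HB Require Import structures.
From mathcomp Require Import all_boot all_order all_algebra.
From mathcomp Require Import all_classical all_reals all_analysis.
From mathcomp Require Import measurable_realfun normal_distribution.
From mathcomp Require Import ring lra.
Import Order.TTheory GRing.Theory Num.Theory.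
Local Open Scope classical_set_scope.
Local Open Scope ring_scope.

(* The laws of [fhat] are translates of the law of [G = <X, betahat>]: the
   group [s] is shifted by [c s = sqrt tau * bhat s + (1 - sqrt tau) * m],
   where [m] is the weighted mean of [bhat], hence also of [c].  Since [G] is
   Gaussian it is square integrable.  For [nu] in P_2, every coupling of
   [Law(G + c s)] and [nu] costs at least the squared difference of the means,
   [(E G + c s - mean nu)^2], and the weighted sum of these is smallest when
   [mean nu = E G + m], where it equals [sum_s w s (c s - m)^2 =
   tau * sum_s w s (bhat s - m)^2].  The law of [G + m] attains the bound,
   because coupling [G + c s] with [G + m] costs exactly [(c s - m)^2]. *)

Section normal_second_moment.
Context {R : realType}.
Local Open Scope ereal_scope.

Lemma ge0_integral_normal_prob (m s : R) (f : R -> \bar R) :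
  (forall x, 0 <= f x) -> measurable_fun [set: R] f ->
  \int[normal_prob m s]_x f x =
  \int[lebesgue_measure]_x (f x * (normal_pdf m s x)%:E).
Proof.
move=> f0 mf; have dom := normal_prob_dominates m s.
have mRN := measurable_int _ (Radon_Nikodym_SigmaFinite.f_integrable dom).
have mpdf : measurable_fun setT (fun x => (normal_pdf m s x)%:E).
  by apply/measurable_EFinP; exact: measurable_normal_pdf.
rewrite -(Radon_Nikodym_SigmaFinite.change_of_variables dom)//.
apply: ae_eq_integral => //; [exact: emeasurable_funM..|].
apply: ae_eqe_mul2l; apply: integral_ae_eq => //.
  exact: Radon_Nikodym_SigmaFinite.f_integrable.
by move=> E _ mE; rewrite -Radon_Nikodym_SigmaFinite.f_integral.
Qed.

Lemma sqr_mul_expR_le (a x : R) : (0 < a)%R ->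
  (x ^+ 2 * expR (- x ^+ 2 / a) <= a *+ 2 * expR (- x ^+ 2 / (a *+ 2)))%R.
Proof.
move=> a0; have a2_neq0 : (a *+ 2 != 0)%R by rewrite gt_eqF ?pmulrn_lgt0.
set y := (x ^+ 2 / (a *+ 2))%R.
have -> : (- x ^+ 2 / a = - y + - y)%R.
  by rewrite /y -mulr_natr; field; rewrite gt_eqF.
have -> : (- x ^+ 2 / (a *+ 2) = - y)%R by rewrite mulNr.
have -> : (x ^+ 2 = a *+ 2 * y)%R by rewrite /y mulrC divfK.
rewrite expRD -mulrA ler_pM2l ?pmulrn_lgt0// mulrA ler_piMl ?expR_ge0//.
rewrite expRN mulrC ler_pdivrMl ?expR_gt0// mulr1.
by apply: le_trans (expR_ge1Dx y); rewrite lerDr.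
Qed.

Lemma normal_prob_sqr_lty (s : R) : s != 0%R ->
  \int[normal_prob 0 s]_x (x ^+ 2)%:E < +oo.
Proof.
move=> s0; set a := (s ^+ 2 *+ 2)%R.
have a_gt0 : (0 < a)%R by rewrite pmulrn_lgt0// exprn_even_gt0.
set s' := (s * Num.sqrt 2)%R.
have s'0 : s' != 0%R by rewrite mulf_neq0// sqrtr_eq0 -ltNge ltr0n.
have s'a : (s' ^+ 2 *+ 2 = a *+ 2)%R.
  by rewrite /s' /a exprMn sqr_sqrtr ?ler0n// mulr_natr.
set C := (normal_peak s * (a *+ 2) / normal_peak s')%R.
have C_ge0 : (0 <= C)%R.
  by rewrite divr_ge0 ?mulr_ge0 ?normal_peak_ge0// ltW// pmulrn_lgt0.
have mpdf' : measurable_fun setT (fun x => (normal_pdf 0 s' x)%:E).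
  by apply/measurable_EFinP; exact: measurable_normal_pdf.
rewrite ge0_integral_normal_prob//; last 2 first.
- by move=> x; rewrite lee_fin sqr_ge0.
- by apply/measurable_EFinP; exact: measurable_funX.
(* [x^2] times the normal density of variance [s^2] is dominated by a multiple
   of the normal density of variance [2 s^2]. *)
apply: (@le_lt_trans _ _ (\int[lebesgue_measure]_x (C%:E * (normal_pdf 0 s' x)%:E))).
  apply: ge0_le_integral => //.
  - by move=> x _; rewrite -EFinM lee_fin mulr_ge0 ?sqr_ge0 ?normal_pdf_ge0.
  - apply/measurable_EFinP/measurable_funM; first exact: measurable_funX.
    exact: measurable_normal_pdf.
  - exact: emeasurable_funM.
  move=> x _; rewrite -EFinM lee_fin.
  rewrite (normal_pdfE _ s0) (normal_pdfE _ s'0) /normal_fun subr0 s'a.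
  rewrite /C mulrCA -!mulrA ler_wpM2l ?normal_peak_ge0//.
  rewrite mulKf ?gt_eqF ?normal_peak_gt0// mulrA -expr2.
  exact: sqr_mul_expR_le.
rewrite ge0_integralZl//; last by move=> x _; rewrite lee_fin normal_pdf_ge0.
by rewrite integral_normal_pdf mule1 ltry.
Qed.

End normal_second_moment.

Section second_moment.
Context d (T : measurableType d) (R : realType) (P : probability T R).
Local Open Scope ereal_scope.

Lemma integral_cst_probability (c : \bar R) : \int[P]_x c = c.
Proof. by rewrite integral_cst//= probability_setT mule1. Qed.

Lemma sqr_lty_integrable (h : T -> R) : measurable_fun setT h ->
  \int[P]_x (h x ^+ 2)%:E < +oo -> P.-integrable setT (EFin \o h).
Proof.
move=> mh h2; apply/integrableP; split; first exact/measurable_EFinP.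
apply: (@le_lt_trans _ _ (\int[P]_x (1 + (h x ^+ 2)%:E))).
  apply: ge0_le_integral => //.
  - by apply: measurableT_comp => //; exact/measurable_EFinP.
  - apply: emeasurable_funD => //.
    by apply/measurable_EFinP; exact: measurable_funX.
  move=> x _; rewrite -EFinD abse_EFin lee_fin.
  have := normr_ge0 (h x); rewrite -(real_normK (num_real (h x))); nra.
rewrite ge0_integralD//; last 2 first.
- by move=> x _; rewrite lee_fin sqr_ge0.
- by apply/measurable_EFinP; exact: measurable_funX.
by rewrite integral_cst_probability lte_add_pinfty ?ltry.
Qed.

Lemma sqr_integral_le (h : T -> R) (t : R) : measurable_fun setT h ->
  P.-integrable setT (EFin \o h) -> \int[P]_x (h x)%:E = t%:E ->
  (t ^+ 2)%:E <= \int[P]_x (h x ^+ 2)%:E.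
Proof.
move=> mh ih ht.
have [->|h2_fin] := eqVneq (\int[P]_x (h x ^+ 2)%:E) +oo; first by rewrite leey.
have ih2 : P.-integrable setT (fun x => (h x ^+ 2)%:E).
  apply/integrableP; split; first by apply/measurable_EFinP; exact: measurable_funX.
  under eq_integral do rewrite abse_EFin ger0_norm ?sqr_ge0//.
  by rewrite ltey.
have icst : P.-integrable setT (cst (t ^+ 2)%:E).
  exact: finite_measure_integrable_cst.
(* tangent line of [u |-> u^2] at [t] *)
have itan : P.-integrable setT (fun x => (2 * t)%:E * (h x)%:E - (t ^+ 2)%:E).
  by apply: integrableB => //; exact: integrableZl.
apply: le_trans (le_integral measurableT itan ih2 _); last first.
  move=> x _; rewrite -EFinM -EFinB lee_fin.
  by have := sqr_ge0 (h x - t); nra.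
rewrite integralB// ?integralZl// ?ht ?integral_cst_probability.
  by rewrite -EFinM -EFinB lee_fin; nra.
exact: integrableZl.
Qed.

Lemma sqrD_cst_lty (h : T -> R) (k : R) : measurable_fun setT h ->
  \int[P]_x (h x ^+ 2)%:E < +oo -> \int[P]_x ((h x + k) ^+ 2)%:E < +oo.
Proof.
move=> mh h2; have mh2 : measurable_fun setT (fun x => (h x ^+ 2)%:E).
  by apply/measurable_EFinP; exact: measurable_funX.
have h2_ge0 x : [set: T] x -> 0 <= (h x ^+ 2)%:E.
  by move=> _; rewrite lee_fin sqr_ge0.
apply: (@le_lt_trans _ _
  (\int[P]_x ((h x ^+ 2)%:E + (h x ^+ 2)%:E + (k ^+ 2 *+ 2)%:E))).
  apply: ge0_le_integral => //.
  - by move=> x _; rewrite lee_fin sqr_ge0.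
  - by apply/measurable_EFinP/measurable_funX; exact: measurable_funD.
  - by apply: emeasurable_funD => //; exact: emeasurable_funD.
  move=> x _; rewrite -!EFinD lee_fin.
  by have := sqr_ge0 (h x - k); rewrite mulr2n; nra.
rewrite ge0_integralD//; last 3 first.
- by move=> x _; rewrite adde_ge0 ?h2_ge0.
- exact: emeasurable_funD.
- by move=> x _; rewrite lee_fin mulrn_wge0 ?sqr_ge0.
rewrite ge0_integralD// integral_cst_probability.
by apply: lte_add_pinfty; [exact: lte_add_pinfty|exact: ltry].
Qed.

End second_moment.

Section equal_laws.
Context {R : realType} {d1 d2} {T1 : measurableType d1} {T2 : measurableType d2}.
Variables (mu1 : {measure set T1 -> \bar R}) (mu2 : {measure set T2 -> \bar R}).
Local Open Scope ereal_scope.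

Lemma eq_law_integral (F1 : T1 -> R) (F2 : T2 -> R) :
  measurable_fun setT F1 -> measurable_fun setT F2 ->
  (forall A, measurable A -> mu1 (F1 @^-1` A) = mu2 (F2 @^-1` A)) ->
  mu1.-integrable setT (EFin \o F1) ->
  mu2.-integrable setT (EFin \o F2) /\
  \int[mu2]_x (F2 x)%:E = \int[mu1]_x (F1 x)%:E.
Proof.
move=> mF1 mF2 law12 iF1.
have push12 (f : R -> \bar R) :
    \int[pushforward mu2 F2]_y f y = \int[pushforward mu1 F1]_y f y.
  by apply: eq_measure_integral => A mA _; exact/esym/law12.
have mabs : measurable_fun setT (fun y : R => `|y%:E|).
  by apply: measurableT_comp => //; exact/measurable_EFinP.
have abs12 : \int[mu2]_x `|(F2 x)%:E| = \int[mu1]_x `|(F1 x)%:E|.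
  have := ge0_integral_pushforward mF2 mu2 measurableT mabs (fun y _ => abse_ge0 y%:E).
  have := ge0_integral_pushforward mF1 mu1 measurableT mabs (fun y _ => abse_ge0 y%:E).
  by rewrite !preimage_setT push12 => -> ->.
have iF2 : mu2.-integrable setT (EFin \o F2).
  apply/integrableP; split; first exact/measurable_EFinP.
  by rewrite abs12; case/integrableP : iF1.
split => //.
have mid : measurable_fun setT (EFin : R -> \bar R) by exact/measurable_EFinP.
have := integral_pushforward mF2 mid (mu := mu2) (D := setT).
have := integral_pushforward mF1 mid (mu := mu1) (D := setT).
by rewrite !preimage_setT push12 => -> // -> //.
Qed.

End equal_laws.

Section wasserstein.
Context {R : realType}.
Local Open Scope ereal_scope.

Definition mean (nu : probability R R) : R := fine (\int[nu]_x x%:E).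

Lemma P2_integrable (nu : probability R R) : P2 nu -> nu.-integrable setT EFin.
Proof. exact: sqr_lty_integrable. Qed.

Lemma integral_mean (nu : probability R R) : P2 nu -> \int[nu]_x x%:E = (mean nu)%:E.
Proof. by move=> /P2_integrable nu_int; rewrite fineK// integrable_fin_num. Qed.

Context d (T : measurableType d) (P : probability T R).

Lemma P2_distribution (F : T -> R) (mF : measurable_fun setT F) :
  \int[P]_x (F x ^+ 2)%:E < +oo -> P2 (distribution P (mfun_Sub (mem_set mF))).
Proof.
rewrite /P2/= ge0_integral_pushforward ?preimage_setT//.
- by apply/measurable_EFinP; exact: measurable_funX.
- by move=> x _; rewrite lee_fin sqr_ge0.
Qed.

Lemma W2sq_ge_sqr_mean (F : T -> R) (a : R) : measurable_fun setT F ->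
    P.-integrable setT (EFin \o F) -> \int[P]_x (F x)%:E = a%:E ->
  forall nu : probability R R, P2 nu ->
  ((a - mean nu) ^+ 2)%:E <= W2sq (pushforward P F) nu.
Proof.
move=> mF iF Fa nu nu2; apply: le_ereal_inf_tmp => _ [pi pi_coupling ->].
have [i1 e1] : pi.-integrable setT (EFin \o fst) /\
    \int[pi]_z (z.1)%:E = \int[P]_x (F x)%:E.
  apply: (eq_law_integral P pi _ _ mF measurable_fst) => // A mA.
  exact/esym/(pi_coupling A mA).1.
have [i2 e2] : pi.-integrable setT (EFin \o snd) /\
    \int[pi]_z (z.2)%:E = \int[nu]_x x%:E.
  apply: (eq_law_integral nu pi _ _ (@measurable_id _ _ setT) measurable_snd).
  - by move=> A mA; exact/esym/(pi_coupling A mA).2.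
  - exact: P2_integrable.
apply: sqr_integral_le.
- exact: measurable_funB.
- by rewrite (_ : EFin \o _ = (EFin \o fst) \- (EFin \o snd))//; exact: integrableB.
under eq_integral do rewrite EFinB.
by rewrite integralB// e1 e2 Fa integral_mean.
Qed.

Lemma W2sq_translate_le (F : T -> R) (c c' : R) : measurable_fun setT F ->
  W2sq (pushforward P (fun x => F x + c)%R) (pushforward P (fun x => F x + c')%R)
  <= ((c - c') ^+ 2)%:E.
Proof.
move=> mF; have mFc k : measurable_fun setT (fun x => F x + k)%R.
  exact: measurable_funD.
have mpair := measurable_fun_pair (mFc c) (mFc c').
apply: ereal_inf_lbound; exists (distribution P (mfun_Sub (mem_set mpair))) => //.
rewrite ge0_integral_pushforward ?preimage_setT//; last 2 first.
- apply/measurable_EFinP/measurable_funX.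
  exact: measurable_funB measurable_fst measurable_snd.
- by move=> z _; rewrite lee_fin sqr_ge0.
under eq_integral do rewrite /= opprD addrACA subrr add0r.
by rewrite integral_cst_probability.
Qed.

End wasserstein.

Lemma gaussian_inner_sqr_lty {R : realType} {d} {Omega : measurableType d}
    {P : probability Omega R} {p} {Sigma : 'M[R]_p} {X : Omega -> 'rV[R]_p} :
  posdef Sigma -> is_gaussian_vector P Sigma X ->
  forall v, (\int[P]_om ((inner (X om) v) ^+ 2)%:E < +oo)%E.
Proof.
move=> [_ Sigma_pd] gaussX v; have [->|v0] := eqVneq v 0.
  rewrite (eq_integral (fun=> 0%E)) ?integral0 ?ltry// => om _.
  by rewrite /inner big1 ?expr0n// => i _; rewrite mxE mulr0.
have [mXv lawXv] := gaussX v.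
(* [normal_prob] lives on the Lebesgue measurable structure of [R], which is
   not the default one: transport [<X, v>] there. *)
pose Xv : Omega -> measurableTypeR R := fun om => inner (X om) v.
have mXv' : measurable_fun setT Xv := mXv.
have lawXv' : pushforward P Xv = normal_prob 0 (Num.sqrt (quadf Sigma v)).
  exact: lawXv.
have msqr : measurable_fun setT (fun x : measurableTypeR R => (x ^+ 2)%:E).
  by apply/measurable_EFinP; exact: measurable_funX.
have sqr_ge0E : {in setT, forall x : measurableTypeR R, (0 <= (x ^+ 2)%:E)%E}.
  by move=> x _; rewrite lee_fin sqr_ge0.
have := ge0_integral_pushforward mXv' P measurableT msqr sqr_ge0E.
rewrite preimage_setT lawXv' => <-.
by apply: normal_prob_sqr_lty; rewrite gt_eqF// sqrtr_gt0 Sigma_pd.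
Qed.

Section weights.
Context {R : realType} (K : nat).

Lemma weights_ge0 (n : 'I_K -> nat) s : 0 <= weights R n s.
Proof. by rewrite divr_ge0 ?ler0n. Qed.

Lemma sum_weights_dev_wmean (n : 'I_K -> nat) (b : 'I_K -> R) :
  (forall s, (0 < n s)%N) ->
  \sum_(s < K) weights R n s * (b s - wmean (weights R n) b) = 0.
Proof.
move=> n_gt0; under eq_bigr do rewrite mulrBr.
rewrite sumrB -mulr_suml /wmean; case: K n b n_gt0 => [|k] n b n_gt0.
  by rewrite !big_ord0 mul0r subr0.
have sum_n_neq0 : (\sum_(t < k.+1) n t)%:R != 0 :> R.
  by rewrite pnatr_eq0 -lt0n (leq_trans (n_gt0 ord0))// (bigD1 ord0)//= leq_addr.
by rewrite -mulr_suml -natr_sum mulfV// mul1r subrr.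
Qed.

End weights.

Lemma sum_sqr_dev_le {R : realFieldType} K (w x : 'I_K -> R) (m t : R) :
  (forall s, 0 <= w s) -> \sum_(s < K) w s * (x s - m) = 0 ->
  \sum_(s < K) w s * (x s - m) ^+ 2 <= \sum_(s < K) w s * (x s - t) ^+ 2.
Proof.
move=> w_ge0 x_centered; rewrite -subr_ge0 -sumrB.
rewrite (eq_bigr (fun s => 2 * (m - t) * (w s * (x s - m)) + (m - t) ^+ 2 * w s));
  last by move=> s _; ring.
by rewrite big_split/= -!mulr_sumr x_centered mulr0 add0r mulr_ge0 ?sqr_ge0 ?sumr_ge0.
Qed.

Section translates.
Context d (T : measurableType d) (R : realType) (P : probability T R).
Variables (K : nat) (w : 'I_K -> R) (G : T -> R) (c : 'I_K -> R) (m : R).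
Hypotheses (w_ge0 : forall s, 0 <= w s)
  (c_centered : \sum_(s < K) w s * (c s - m) = 0)
  (mG : measurable_fun setT G) (G_sqr_lty : (\int[P]_x (G x ^+ 2)%:E < +oo)%E).
Local Open Scope ereal_scope.

Let mu s := pushforward P (fun x => G x + c s)%R.
Let mGk k : measurable_fun setT (fun x => G x + k)%R.
Proof. exact: measurable_funD. Qed.

Let G_integrable : P.-integrable setT (EFin \o G).
Proof. exact: sqr_lty_integrable. Qed.

Let integral_translate (k : R) :
  \int[P]_x (G x + k)%:E = (fine (\int[P]_x (G x)%:E) + k)%:E.
Proof.
under eq_integral do rewrite EFinD.
rewrite integralD//; last exact: finite_measure_integrable_cst.
by rewrite integral_cst_probability EFinD fineK ?integrable_fin_num.
Qed.

Let translate_integrable k : P.-integrable setT (EFin \o (fun x => G x + k)%R).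
Proof.
rewrite (_ : EFin \o _ = (EFin \o G) \+ cst k%:E); last first.
  by apply/funext => x /=; rewrite EFinD.
by apply: integrableD => //; exact: finite_measure_integrable_cst.
Qed.

Let unf_obj_translates_ge (nu : probability R R) : P2 nu ->
  (\sum_(s < K) w s * (c s - m) ^+ 2)%R%:E <= unf_obj w mu nu.
Proof.
move=> nu_P2; set g := fine (\int[P]_x (G x)%:E).
apply: (@le_trans _ _ (\sum_(s < K) (w s * (g + c s - mean nu) ^+ 2)%R%:E)).
  rewrite sumEFin lee_fin.
  rewrite [leRHS](eq_bigr (fun s => w s * (c s - (mean nu - g)) ^+ 2)%R).
    exact: sum_sqr_dev_le.
  by move=> s _; congr (_ * _ ^+ 2)%R; ring.
apply: lee_sum => s _; rewrite EFinM lee_wpmul2l ?lee_fin//.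
exact: W2sq_ge_sqr_mean.
Qed.

Lemma unfairness_translates :
  unfairness w mu = (\sum_(s < K) w s * (c s - m) ^+ 2)%R%:E /\
  exists2 nu, P2 nu & unf_obj w mu nu = unfairness w mu.
Proof.
set V := (\sum_(s < K) w s * (c s - m) ^+ 2)%R.
pose nu0 := distribution P (mfun_Sub (mem_set (mGk m))).
have nu0_P2 : P2 nu0 by apply: P2_distribution; exact: sqrD_cst_lty.
have nu0_le : unf_obj w mu nu0 <= V%:E.
  rewrite /unf_obj /V -sumEFin; apply: lee_sum => s _.
  by rewrite EFinM lee_wpmul2l ?lee_fin//; exact: W2sq_translate_le.
have unfE : unfairness w mu = V%:E.
  apply/eqP; rewrite eq_le; apply/andP; split.
    by apply: le_trans nu0_le; apply: ereal_inf_lbound; exists nu0.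
  by apply: le_ereal_inf_tmp => _ [nu nu_P2 ->]; exact: unf_obj_translates_ge.
split=> //; exists nu0 => //.
by apply/eqP; rewrite unfE eq_le nu0_le unf_obj_translates_ge.
Qed.

End translates.

Theorem lemma3 (R : realType) (K p : nat) (Sigma : 'M[R]_p)
  (d : measure_display) (Omega : measurableType d) (P : probability Omega R)
  (X : Omega -> 'rV[R]_p)
  (n : 'I_K -> nat) (Xs : forall s : 'I_K, 'M[R]_(n s, p))
  (Ys : forall s : 'I_K, 'cV[R]_(n s))
  (betahat : 'rV[R]_p) (bhat : 'I_K -> R) (tau : R) :
  posdef Sigma ->
  is_gaussian_vector P Sigma X ->
  (forall s, (0 < n s)%N) ->
  is_erm Xs Ys betahat bhat ->
  0 <= tau <= 1 ->
  let w := weights R n in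
  let mu := fun s => law P (fun om => fhat w betahat bhat tau (X om) s) in
  unfairness w mu =
    (tau * \sum_(s < K) w s * (bhat s - wmean w bhat) ^+ 2)%:E /\
  exists2 nu, P2 nu & unf_obj w mu nu = unfairness w mu.
Proof.
move=> Sigma_pd gaussX n_gt0 _ /andP[tau_ge0 _] w mu.
set m := wmean w bhat.
pose c s := Num.sqrt tau * bhat s + (1 - Num.sqrt tau) * m.
have c_dev s : c s - m = Num.sqrt tau * (bhat s - m) by rewrite /c; ring.
have -> : mu = fun s => pushforward P (fun om => inner (X om) betahat + c s).
  by apply/funext => s; congr pushforward; apply/funext => om; rewrite /fhat -/m addrA.
have -> : tau * \sum_(s < K) w s * (bhat s - m) ^+ 2 =
          \sum_(s < K) w s * (c s - m) ^+ 2.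
  by rewrite mulr_sumr; apply: eq_bigr => s _; rewrite c_dev exprMn sqr_sqrtr//; ring.
apply: unfairness_translates.
- exact: weights_ge0.
- rewrite (eq_bigr (fun s => Num.sqrt tau * (w s * (bhat s - m)))); last first.
    by move=> s _; rewrite c_dev mulrCA.
  by rewrite -mulr_sumr sum_weights_dev_wmean// mulr0.
- exact: (gaussX betahat).1.
- exact: gaussian_inner_sqr_lty Sigma_pd gaussX betahat.
Qed.
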